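(* Let $f:\mathbb{R}^n\to\mathbb{R}$ be differentiable and pseudo-convex, with $\nabla f$ $L$-Lipschitz continuous ($L>0$), and assume the stationary set $X^*$ is non-empty. Let $0<h<\frac{1}{L}$ and $\beta\in\left(\frac{1-\sqrt{1-h^2L^2}}{h^2L^2},1\right]$. Then the sequence $\{x^k\}$ generated by Algorithm 1 from any $x^0\in\mathbb{R}^n$ converges to a point of $X^*$.
   Context: A differentiable $f$ is pseudo-convex if $\nabla f$ is pseudo-monotone, i.e. for all $x,y$, $\langle \nabla f(x),y-x\rangle\ge 0$ implies $\langle \nabla f(y),y-x\rangle\ge0$. The stationary set is $X^*=\{x\in\mathbb{R}^n:\nabla f(x)=0\}$. Algorithm 1: given $x^0$, for $k=0,1,2,\dots$ set $z^k=x^k-h\nabla f(x^k)$ and $x^{k+1}=x^k-h\big(\nabla f(x^k)-\beta(\nabla f(x^k)-\nabla f(z^k))\big)$. *)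

From HB Require Import structures.
From mathcomp Require Import all_boot all_order all_algebra.
From mathcomp Require Import all_classical all_reals all_analysis.
Set Implicit Arguments. Unset Strict Implicit. Unset Printing Implicit Defensive.
Import Order.TTheory GRing.Theory Num.Theory.
Import numFieldNormedType.Exports.
Local Open Scope ring_scope.
Local Open Scope classical_set_scope.

Definition dotv (R : realType) (n : nat) (u v : 'rV[R]_n) : R :=
  \sum_(i < n) u ord0 i * v ord0 i.

Definition enorm (R : realType) (n : nat) (v : 'rV[R]_n) : R :=
  Num.sqrt (dotv v v).

(* gradient: the row vector of partial derivatives, i.e. the vector
   representing the (Frechet) differential 'd f x in the standard basis *)
Definition grad (R : realType) (n : nat) (f : 'rV[R]_n -> R^o)
  (x : 'rV[R]_n) : 'rV[R]_n :=
  \row_(i < n) ('d f x (delta_mx ord0 i : 'rV[R]_n)).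

Definition pseudo_monotone (R : realType) (n : nat)
  (F : 'rV[R]_n -> 'rV[R]_n) : Prop :=
  forall x y, 0 <= dotv (F x) (y - x) -> 0 <= dotv (F y) (y - x).

(* differentiable f is pseudo-convex iff its gradient is pseudo-monotone *)
Definition pseudo_convex (R : realType) (n : nat) (f : 'rV[R]_n -> R^o) : Prop :=
  pseudo_monotone (grad f).

Definition lipschitz_with (R : realType) (n : nat) (L : R)
  (F : 'rV[R]_n -> 'rV[R]_n) : Prop :=
  forall x y, enorm (F x - F y) <= L * enorm (x - y).

Definition stationary_set (R : realType) (n : nat) (f : 'rV[R]_n -> R^o)
  : set 'rV[R]_n := [set x | grad f x = 0].

Fixpoint alg1 (R : realType) (n : nat) (f : 'rV[R]_n -> R^o) (h beta : R)
  (x0 : 'rV[R]_n) (k : nat) : 'rV[R]_n :=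
  match k with
  | O => x0
  | S k' =>
      let xk := alg1 f h beta x0 k' in
      let zk := xk - h *: grad f xk in
      xk - h *: (grad f xk - beta *: (grad f xk - grad f zk))
  end.

From HB Require Import structures.
From mathcomp Require Import all_boot all_order all_algebra.
From mathcomp Require Import all_classical all_reals all_analysis.
From mathcomp Require Import lra.
Import Order.TTheory GRing.Theory Num.Theory.
Import numFieldNormedType.Exports.
Local Open Scope ring_scope.
Local Open Scope classical_set_scope.

(* Fix a stationary point p.  Pseudo-monotonicity of the gradient against
   grad f p = 0 gives <grad f x^k, x^k - p> >= 0 and <grad f z^k, z^k - p> >= 0;
   expanding |x^{k+1} - p|^2 and bounding |grad f x^k - grad f z^k| <= h L |grad f x^k|
   yields the Fejer inequality
     |x^{k+1} - p|^2 + c h^2 |grad f x^k|^2 <= |x^k - p|^2,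
   c = 2 beta - 1 - beta^2 h^2 L^2,
   and the window for beta is exactly the condition c > 0.  So the iterates
   stay in a compact ball, the gradients tend to 0, and by continuity of the
   gradient every cluster point xb is stationary; Fejer monotonicity with
   respect to xb itself then forces the whole sequence to converge to xb. *)

Section Euclidean.
Context {R : realType} {n : nat}.
Implicit Types (u v w : 'rV[R]_n) (a : R).

Lemma dotvC u v : dotv u v = dotv v u.
Proof. by apply: eq_bigr => i _; rewrite mulrC. Qed.

Lemma dotvDl u v w : dotv (u + v) w = dotv u w + dotv v w.
Proof. by rewrite /dotv -big_split; apply: eq_bigr => i _; rewrite mxE mulrDl. Qed.

Lemma dotvDr u v w : dotv u (v + w) = dotv u v + dotv u w.
Proof. by rewrite dotvC dotvDl !(dotvC u). Qed.

Lemma dotvZl a u v : dotv (a *: u) v = a * dotv u v.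
Proof. by rewrite /dotv mulr_sumr; apply: eq_bigr => i _; rewrite mxE mulrA. Qed.

Lemma dotvZr a u v : dotv u (a *: v) = a * dotv u v.
Proof. by rewrite dotvC dotvZl dotvC. Qed.

Lemma dotvNl u v : dotv (- u) v = - dotv u v.
Proof. by rewrite -scaleN1r dotvZl mulN1r. Qed.

Lemma dotvNr u v : dotv u (- v) = - dotv u v.
Proof. by rewrite dotvC dotvNl dotvC. Qed.

Lemma dotvBl u v w : dotv (u - v) w = dotv u w - dotv v w.
Proof. by rewrite dotvDl dotvNl. Qed.

Lemma dotvBr u v w : dotv u (v - w) = dotv u v - dotv u w.
Proof. by rewrite dotvDr dotvNr. Qed.

Lemma dotv0l v : dotv 0 v = 0.
Proof. by rewrite /dotv big1 // => i _; rewrite mxE mul0r. Qed.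

Lemma sqr_coord_le_dotvv v i : v ord0 i ^+ 2 <= dotv v v.
Proof.
rewrite /dotv (bigD1 i) //= -expr2 lerDl.
by apply: sumr_ge0 => j _; rewrite -expr2 sqr_ge0.
Qed.

Lemma dotvv_ge0 v : 0 <= dotv v v.
Proof. by apply: sumr_ge0 => i _; rewrite -expr2 sqr_ge0. Qed.

Lemma enorm_ge0 v : 0 <= enorm v.
Proof. exact: sqrtr_ge0. Qed.

Lemma enorm_sqr v : enorm v ^+ 2 = dotv v v.
Proof. by rewrite sqr_sqrtr // dotvv_ge0. Qed.

Lemma enormBC u v : enorm (u - v) = enorm (v - u).
Proof. by rewrite -opprB /enorm dotvNl dotvNr opprK. Qed.

Lemma normr_coord_le_enorm v i : `|v ord0 i| <= enorm v.
Proof.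
rewrite -ler_sqr ?nnegrE ?enorm_ge0 // real_normK ?num_real // enorm_sqr.
exact: sqr_coord_le_dotvv.
Qed.

Lemma normr_le_enorm v : `|v| <= enorm v.
Proof.
rewrite -[`|v|]/(mx_norm v) mx_normrE; apply: bigmax_le => [|[i j] _ /=].
  exact: enorm_ge0.
by rewrite (ord1 i) normr_coord_le_enorm.
Qed.

Lemma enorm_sqr_le_normr v : enorm v ^+ 2 <= n%:R * `|v| ^+ 2.
Proof.
rewrite enorm_sqr mulr_natl -[X in _ *+ X]card_ord -sumr_const /dotv.
apply: ler_sum => i _.
rewrite -expr2 -real_normK ?num_real // ler_sqr ?nnegrE //.
rewrite -[`|v|]/(mx_norm v) mx_normrE; apply/bigmax_geP; right.
by exists (ord0, i).
Qed.

Lemma lipschitz_dotv {L : R} {F : 'rV[R]_n -> 'rV[R]_n} :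
  lipschitz_with L F ->
  forall u v, dotv (F u - F v) (F u - F v) <= L ^+ 2 * dotv (u - v) (u - v).
Proof.
move=> lipF u v; rewrite -!enorm_sqr -exprMn ler_sqr ?nnegrE ?enorm_ge0 ?lipF //.
exact: le_trans (enorm_ge0 _) (lipF u v).
Qed.

Lemma nbhs_enorm_lt (p : 'rV[R]_n) {e : R} :
  0 < e -> nbhs p [set y | enorm (y - p) < e].
Proof.
move=> e0; apply/nbhs_ballP.
exists (e / n.+1%:R); first by rewrite /= divr_gt0.
move=> y; rewrite mx_norm_ball /ball_ /= => py.
rewrite enormBC -ltr_sqr ?nnegrE ?enorm_ge0 ?ltW //.
apply: le_lt_trans (enorm_sqr_le_normr _) _.
set d := e / n.+1%:R in py *.
have d0 : 0 < d by rewrite divr_gt0.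
have <- : n.+1%:R * d = e by rewrite /d mulrC divfK ?gt_eqF.
have py2 : `|p - y| ^+ 2 <= d ^+ 2 by rewrite ler_sqr ?nnegrE ?(ltW d0) ?(ltW py).
apply: le_lt_trans (ler_wpM2l (ler0n _ n) py2) _.
rewrite [X in _ < X]exprMn (ltr_pM2r (exprn_gt0 2 d0)).
rewrite (lt_le_trans (_ : _ < n.+1%:R)) ?ltr_nat //.
by rewrite -natrX ler_nat expnS leq_pmulr ?expn_gt0.
Qed.

Lemma lipschitz_continuous {L : R} {F : 'rV[R]_n -> 'rV[R]_n} :
  lipschitz_with L F -> continuous F.
Proof.
(* The filter instance of [nbhs x] on 'rV is not found by inference here. *)
move=> lipF x; apply/(cvgrPdist_lt (FF := nbhs_filter x)) => e e0.
have L1 : 0 < `|L| + 1 by rewrite ltr_pwDr.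
apply: filterS (nbhs_enorm_lt x (divr_gt0 e0 L1)) => y /=.
rewrite enormBC ltr_pdivlMr // => xy.
apply: le_lt_trans (normr_le_enorm _) _; apply: le_lt_trans (lipF x y) _.
apply: le_lt_trans xy; rewrite mulrC ler_wpM2l ?enorm_ge0 //.
by rewrite (le_trans (ler_norm L)) ?lerDl.
Qed.

End Euclidean.

Lemma cluster_image {T U : topologicalType} {F : set_system T} {g : T -> U} {p : T} :
  {for p, continuous g} -> cluster F p -> cluster (g @ F) (g p).
Proof.
move=> gp Fp A B FA Bgp; have [y [Ay By]] := Fp _ _ FA (gp _ Bgp).
by exists (g y).
Qed.

Lemma decrement_cvg0 (R : realType) (V u : R ^nat) (a : R) :
  0 < a -> (forall k, 0 <= V k) -> (forall k, 0 <= u k) ->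
  (forall k, V k.+1 + a * u k <= V k) -> u @ \oo --> 0.
Proof.
move=> a0 V0 u0 Vdec.
have Vni : nonincreasing_seq V.
  by apply/nonincreasing_seqP => k; have := Vdec k; have := u0 k; nra.
have /cvg_ex[l Vl] : cvgn V.
  by apply: nonincreasing_is_cvgn => //; exists 0 => _ [k _ <-].
have Vdiff0 : (fun k => (V k - V k.+1) / a) @ \oo --> 0.
  have -> : 0 = (l - l) / a :> R by rewrite subrr mul0r.
  by apply: cvgMr_tmp; apply: cvgB => //; rewrite cvg_shiftS.
apply: (squeeze_cvgr _ (cvg_cst 0) Vdiff0); near=> k.
by rewrite u0 /= ler_pdivlMr // mulrC lerBrDl; exact: Vdec.
Unshelve. all: by end_near.
Qed.

Section Sequences.
Context {R : realType} {n : nat}.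
Implicit Types (x : nat -> 'rV[R]_n) (p : 'rV[R]_n).

Lemma enorm_sqr_cvg0 x :
  (fun k => enorm (x k) ^+ 2) @ \oo --> 0 -> x @ \oo --> (0 : 'rV[R]_n).
Proof.
move=> x0; apply/cvgrPdist_lt => e e0.
near=> k.
have xk : enorm (x k) ^+ 2 < e ^+ 2 by near: k; exact: cvgr_lt _ x0 _ (exprn_gt0 2 e0).
rewrite sub0r normrN (le_lt_trans (normr_le_enorm _)) //.
by rewrite -ltr_sqr ?nnegrE ?enorm_ge0 ?ltW.
Unshelve. all: by end_near.
Qed.

Lemma bounded_cluster x p M :
  (forall k, enorm (x k - p) <= M) -> exists xb, cluster (x @ \oo) xb.
Proof.
move=> xM.
pose box := [set v : 'rV[R]_n | forall i,
  `[p ord0 i - M, p ord0 i + M]%classic (v ord0 i)].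
have box_compact : compact box.
  apply: (@rV_compact _ n (fun i => `[p ord0 i - M, p ord0 i + M]%classic)).
  by move=> i; exact: segment_compact.
have x_box : (x @ \oo) box.
  exists 0%N => // k _ i /=; rewrite in_itv /=.
  have := le_trans (normr_coord_le_enorm _ i) (xM k).
  by rewrite !mxE ler_norml => /andP[? ?]; apply/andP; split; lra.
by have [xb [_ ?]] := box_compact _ _ x_box; exists xb.
Qed.

Lemma fejer_cvg x p :
  nonincreasing_seq (fun k => enorm (x k - p)) -> cluster (x @ \oo) p ->
  x @ \oo --> p.
Proof.
move=> xp_ni xp; apply/cvgrPdist_lt => e e0.
have x_range : (x @ \oo) (range x) by exists 0%N => // k _; exists k.
have [_ [[k _ <-] xk]] := xp _ _ x_range (nbhs_enorm_lt p e0).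
exists k => // j /= kj.
rewrite (le_lt_trans (normr_le_enorm _)) // enormBC.
exact: le_lt_trans (xp_ni _ _ kj) xk.
Qed.

End Sequences.

Lemma descent_coef_gt0 {R : realType} {L h beta : R} :
  0 < L -> 0 < h -> h < L^-1 ->
  (1 - Num.sqrt (1 - h ^+ 2 * L ^+ 2)) / (h ^+ 2 * L ^+ 2) < beta -> beta <= 1 ->
  0 < 2 * beta - 1 - beta ^+ 2 * (h ^+ 2 * L ^+ 2).
Proof.
move=> L0 h0 hL; set T := h ^+ 2 * L ^+ 2 => Tb b1.
have T0 : 0 < T by rewrite mulr_gt0 // exprn_gt0.
have T1 : T < 1.
  have hL1 : h * L < 1 by rewrite -ltr_pdivlMr // div1r.
  by rewrite /T -exprMn expr_lt1 // mulr_ge0 // ltW.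
set s := Num.sqrt (1 - T) in Tb.
have s0 : 0 <= s := sqrtr_ge0 _.
have s2 : s ^+ 2 = 1 - T by rewrite sqr_sqrtr // subr_ge0 ltW.
rewrite ltr_pdivrMr // in Tb.
have bT1 : 0 < 1 - beta * T by nra.
(* (s - (1 - beta T)) (s + (1 - beta T)) = T (2 beta - 1 - beta^2 T) *)
have : 0 < T * (2 * beta - 1 - beta ^+ 2 * T).
  have : 0 < (s - (1 - beta * T)) * (s + (1 - beta * T)) by apply: mulr_gt0; lra.
  nra.
by rewrite pmulr_rgt0.
Qed.

Section Extragradient.
Context {R : realType} {n : nat}.

Lemma extragradient_descent (r a b : 'rV[R]_n) (h beta T : R) :
  0 < h -> 0 <= beta <= 1 -> 0 <= dotv a r -> 0 <= dotv b (r - h *: a) ->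
  dotv (a - b) (a - b) <= T * dotv a a ->
  dotv (r - h *: (a - beta *: (a - b))) (r - h *: (a - beta *: (a - b)))
    <= dotv r r - (2 * beta - 1 - beta ^+ 2 * T) * h ^+ 2 * dotv a a.
Proof.
move=> h0 /andP[b0 b1] ra rhab abT.
rewrite !(dotvBl, dotvBr, dotvZl, dotvZr) in rhab abT *.
rewrite (dotvC a r) (dotvC b r) (dotvC b a) in ra rhab abT *.
have P1 : 0 <= 2 * h * (1 - beta) * dotv r a.
  by rewrite !mulr_ge0 ?subr_ge0 ?(ltW h0).
have P2 : 0 <= 2 * h * beta * (dotv r b - h * dotv a b).
  by rewrite !mulr_ge0 ?(ltW h0).
have P3 : 0 <= h ^+ 2 * beta ^+ 2 * (T * dotv a a - (dotv a a - dotv a b - (dotv a b - dotv b b))).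
  by rewrite mulr_ge0 ?subr_ge0 // mulr_ge0 ?sqr_ge0.
(* The goal's right-hand side minus its left-hand side is P1 + P2 + P3. *)
nra.
Qed.

Lemma alg1_fejer (f : 'rV[R]_n -> R^o) (L h beta : R) (x0 p : 'rV[R]_n) k :
  pseudo_convex f -> lipschitz_with L (grad f) -> 0 < h -> 0 <= beta <= 1 ->
  grad f p = 0 ->
  enorm (alg1 f h beta x0 k.+1 - p) ^+ 2
    + (2 * beta - 1 - beta ^+ 2 * (h ^+ 2 * L ^+ 2)) * h ^+ 2
      * enorm (grad f (alg1 f h beta x0 k)) ^+ 2
  <= enorm (alg1 f h beta x0 k - p) ^+ 2.
Proof.
move=> pcf lip h0 beta01 gp; rewrite /= -/(alg1 f h beta x0 k) !enorm_sqr.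
set x := alg1 f h beta x0 k; set a := grad f x; set b := grad f (x - h *: a).
have -> : x - h *: (a - beta *: (a - b)) - p = (x - p) - h *: (a - beta *: (a - b)).
  by rewrite addrAC.
rewrite -lerBrDr; apply: extragradient_descent => //.
- by apply: pcf; rewrite gp dotv0l.
- by rewrite addrAC; apply: pcf; rewrite gp dotv0l.
have := lipschitz_dotv lip x (x - h *: a); rewrite -/b.
have -> : x - (x - h *: a) = h *: a by rewrite opprB addrC subrK.
rewrite dotvZl dotvZr => /le_trans; apply.
by rewrite [h * (h * _)]mulrA -expr2 mulrA (mulrC (L ^+ 2)).
Qed.

End Extragradient.

Theorem theorem1 (R : realType) (n : nat) (f : 'rV[R]_n -> R^o) (L h beta : R)
  (x0 : 'rV[R]_n) :
  (forall x, differentiable f x) ->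
  pseudo_convex f ->
  0 < L ->
  lipschitz_with L (grad f) ->
  stationary_set f !=set0 ->
  0 < h -> h < L^-1 ->
  (1 - Num.sqrt (1 - h ^+ 2 * L ^+ 2)) / (h ^+ 2 * L ^+ 2) < beta ->
  beta <= 1 ->
  exists2 xs, stationary_set f xs &
    alg1 f h beta x0 @ \oo --> xs.
Proof.
move=> _ pcf L0 lip [p gp] h0 hL hbeta beta1.
have c0 := descent_coef_gt0 L0 h0 hL hbeta beta1.
have beta01 : 0 <= beta <= 1.
  by rewrite beta1 andbT; have := mulr_ge0 (sqr_ge0 h) (sqr_ge0 L); nra.
set c := 2 * beta - 1 - _ in c0; set x := alg1 f h beta x0.
have fejer q : grad f q = 0 -> forall k,
    enorm (x k.+1 - q) ^+ 2 + c * h ^+ 2 * enorm (grad f (x k)) ^+ 2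
    <= enorm (x k - q) ^+ 2.
  by move=> gq k; exact: alg1_fejer.
have dist_ni q : grad f q = 0 -> nonincreasing_seq (fun k => enorm (x k - q)).
  move=> gq; apply/nonincreasing_seqP => k /=.
  rewrite -ler_sqr ?nnegrE ?enorm_ge0 //; apply: le_trans (fejer q gq k).
  by rewrite lerDl mulr_ge0 ?sqr_ge0 // mulr_ge0 ?sqr_ge0 ?(ltW c0).
have [xb clx] : exists xb, cluster (x @ \oo) xb.
  by apply: (bounded_cluster _ p (enorm (x 0%N - p))) => k; apply: dist_ni.
have grad_x0 : grad f \o x @ \oo --> (0 : 'rV[R]_n).
  apply: enorm_sqr_cvg0; apply: decrement_cvg0 (fejer p gp) => //.
  - by rewrite mulr_gt0 ?exprn_gt0.
  - by move=> k; rewrite sqr_ge0.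
  - by move=> k; rewrite sqr_ge0.
have gxb : grad f xb = 0.
  have cl : cluster (grad f \o x @ \oo) (grad f xb).
    exact: cluster_image (lipschitz_continuous lip xb) clx.
  have cl0 : cluster (nbhs (0 : 'rV[R]_n)) (grad f xb) := cvg_cluster grad_x0 cl.
  exact: esym (norm_hausdorff cl0).
by exists xb => //; apply: fejer_cvg (dist_ni xb gxb) clx.
Qed.
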